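(* Let $X$ be a Banach space with Rolewicz' property $(\alpha)$ (in particular, any finite-dimensional $X$, or any reflexive asymptotically uniformly convex $X$). Then $X$ contains no $\mathfrak{D}$-point.
   Context: For $x\in S_X$ let $D(x)=\{x^*\in S_{X^*}:x^*(x)=1\}$, and for $x^*\in S_{X^*}$, $\varepsilon>0$ let $S(x^*,\varepsilon)=\{y\in B_X:x^*(y)>1-\varepsilon\}$. A point $x\in S_X$ is a $\mathfrak{D}$-point if $\sup_{y\in S(x^*,\varepsilon)}\|x-y\|=2$ for every $x^*\in D(x)$ and $\varepsilon>0$. Let $\alpha(A)$ denote the Kuratowski measure of non-compactness of a bounded set $A$ (the infimum of $r>0$ such that $A$ can be covered by finitely many sets of diameter at most $r$). $X$ has Rolewicz' property $(\alpha)$ if for every $x^*\in S_{X^*}$ and $\varepsilon>0$ there is $\delta>0$ with $\alpha(S(x^*,\delta))\le\varepsilon$. *)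

From HB Require Import structures.
From mathcomp Require Import all_boot all_order all_algebra.
From mathcomp Require Import all_classical all_reals all_analysis.
Set Implicit Arguments. Unset Strict Implicit. Unset Printing Implicit Defensive.
Import Order.TTheory GRing.Theory Num.Theory.
Import numFieldNormedType.Exports.
Local Open Scope classical_set_scope.
Local Open Scope ring_scope.

Section Defs.
Variables (R : realType) (X : normedModType R).

Definition dual_unit_sphere (f : X -> R) : Prop :=
  (forall (a : R) (u v : X), f (a *: u + v) = a * f u + f v) /\
  sup [set `|f y| | y in [set y : X | `|y| <= 1]] = 1.

Definition support_functionals (x : X) : set (X -> R) :=
  [set f | dual_unit_sphere f /\ f x = 1].

Definition slice (f : X -> R) (eps : R) : set X :=
  [set y | `|y| <= 1 /\ 1 - eps < f y].

Definition Dpoint (x : X) : Prop :=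
  `|x| = 1 /\
  forall f, support_functionals x f -> forall eps : R, 0 < eps ->
    sup [set `|x - y| | y in slice f eps] = 2.

Definition diam_le (B : set X) (r : R) : Prop :=
  forall a b, B a -> B b -> `|a - b| <= r.

Definition kuratowski (A : set X) : R :=
  inf [set r : R | 0 < r /\
        exists (n : nat) (B : nat -> set X),
          A `<=` \bigcup_(i in [set i | (i < n)%N]) B i /\
          forall i, (i < n)%N -> diam_le (B i) r].

Definition rolewicz_alpha : Prop :=
  forall f, dual_unit_sphere f -> forall eps : R, 0 < eps ->
    exists2 delta : R, 0 < delta & kuratowski (slice f delta) <= eps.
End Defs.

(* Suppose x is a D-point and call T far if every slice of B_X through D(x)
   contains points of T at distance almost 2 from x; X itself is far.
   Property (alpha) covers a slice through D(x) by finitely many sets of small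
   diameter, and finitely many slices through D(x) share a common subslice
   through D(x) (cut by the average functional), so one of these small sets is
   again far. Iterating yields nested far sets of vanishing diameter, which
   shrink to a point z of B_X with |x - z| = 2. A functional norming x - z lies
   in D(x) and equals -1 at z, so its slices stay away from z: no far set can
   lie near z. The Hahn-Banach theorem needed here is obtained by Zorn's lemma
   on graphs of norm-dominated partial linear functionals. *)

From HB Require Import structures.
From mathcomp Require Import all_boot all_order all_algebra.
From mathcomp Require Import all_classical all_reals all_analysis.
From mathcomp Require Import lra.
Import Order.TTheory GRing.Theory Num.Theory.
Import numFieldNormedType.Exports.
Local Open Scope classical_set_scope.
Local Open Scope ring_scope.
Set Implicit Arguments. Unset Strict Implicit.

Section LinearFunctional.
Variables (R : realType) (X : normedModType R).
Implicit Types (f : X -> R) (u v y : X).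

Definition linear_functional f :=
  forall (a : R) (u v : X), f (a *: u + v) = a * f u + f v.

Section Laws.
Variables (f : X -> R) (lf : linear_functional f).

Lemma linear_functional0 : f 0 = 0.
Proof.
have := lf 1 0 0; rewrite scaler0 addr0 mul1r => f0E.
by apply/(addrI (f 0)); rewrite addr0 -f0E.
Qed.

Lemma linear_functionalZ a u : f (a *: u) = a * f u.
Proof. by have := lf a u 0; rewrite !addr0 linear_functional0 addr0. Qed.

Lemma linear_functionalD u v : f (u + v) = f u + f v.
Proof. by have := lf 1 u v; rewrite scale1r mul1r. Qed.

Lemma linear_functionalB u v : f (u - v) = f u - f v.
Proof.
by rewrite linear_functionalD -scaleN1r linear_functionalZ mulN1r.
Qed.

End Laws.

Lemma dual_unit_sphere_linear f : dual_unit_sphere f -> linear_functional f.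
Proof. by case. Qed.

Lemma dual_unit_sphere_le_norm f y : dual_unit_sphere f -> `|f y| <= `|y|.
Proof.
case=> lf supE.
have supS : has_sup [set `|f y| | y in [set y : X | `|y| <= 1]].
  by apply: contrapT => /sup_out; rewrite supE => /eqP; rewrite oner_eq0.
have le1 z : `|z| <= 1 -> `|f z| <= 1.
  by move=> z1; rewrite -supE; apply: sup_upper_bound => //; exists z.
have [->|y0] := eqVneq y 0; first by rewrite (linear_functional0 lf) !normr0.
have ny : 0 < `|y| by rewrite normr_gt0.
have := le1 (`|y|^-1 *: y).
rewrite (linear_functionalZ lf) !normrZ normrV ?unitfE ?normr_eq0 // normr_id.
by rewrite mulVf ?normr_eq0 // lexx ler_pdivrMl // mulr1; apply.
Qed.

Lemma dual_unit_sphere_le1 f y :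
  dual_unit_sphere f -> `|y| <= 1 -> f y <= 1.
Proof.
move=> df y1; apply: le_trans (ler_norm _) _.
exact: le_trans (dual_unit_sphere_le_norm y df) y1.
Qed.

Lemma norming_dual_unit_sphere f v : linear_functional f ->
  (forall y, `|f y| <= `|y|) -> v != 0 -> f v = `|v| -> dual_unit_sphere f.
Proof.
move=> lf fle v0 fv; split => //.
set S := [set `|f y| | y in _].
have ubS : ubound S 1 by move=> _ [y /= y1 <-]; exact: le_trans (fle y) y1.
have nv : `| `|v|^-1 *: v| = 1.
  by rewrite normrZ normrV ?unitfE ?normr_eq0 // normr_id mulVf ?normr_eq0.
have S0 : S `|f 0| by exists 0; rewrite //= normr0.
apply/le_anti/andP; split; first by apply: ge_sup => //; exists `|f 0|.
apply: sup_upper_bound; first by split; [exists `|f 0| | exists 1].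
exists (`|v|^-1 *: v); first by rewrite /= nv.
by rewrite (linear_functionalZ lf) fv mulVf ?normr1 ?normr_eq0.
Qed.

End LinearFunctional.

Section HahnBanach.
Variables (R : realType) (X : normedModType R).
Implicit Types (G A : set (X * R)) (a b u v : X) (r s : R).

Definition dominated_linear_graph G :=
  [/\ forall a r b s (c : R), G (a, r) -> G (b, s) -> G (c *: a + b, c * r + s),
      forall a r s, G (a, r) -> G (a, s) -> r = s
    & forall a r, G (a, r) -> r <= `|a|].

Lemma dominated_linear_graph00 G p :
  dominated_linear_graph G -> G p -> G (0, 0).
Proof.
case: p => a r [GD _ _] Gar; have := GD _ _ _ _ (-1) Gar Gar.
by rewrite scaleN1r mulN1r !addNr.
Qed.

Lemma bigcup_dominated_linear_graph (F : set (set (X * R))) :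
  F `<=` dominated_linear_graph -> total_on F subset ->
  dominated_linear_graph (\bigcup_(G in F) G).
Proof.
move=> Fdom Ftot.
have common p q : (\bigcup_(G in F) G) p -> (\bigcup_(G in F) G) q ->
    exists2 G, F G & G p /\ G q.
  move=> [G1 FG1 G1p] [G2 FG2 G2q].
  have [G12|G21] := Ftot _ _ FG1 FG2; first by exists G2 => //; split => //; exact: G12.
  by exists G1 => //; split => //; exact: G21.
split.
- move=> a r b s c Uar Ubs; have [G FG [Gar Gbs]] := common _ _ Uar Ubs.
  by exists G => //; have [GD _ _] := Fdom _ FG; exact: GD.
- move=> a r s Uar Uas; have [G FG [Gar Gas]] := common _ _ Uar Uas.
  by have [_ Gfun _] := Fdom _ FG; exact: Gfun Gar Gas.
- by move=> a r [G FG Gar]; have [_ _] := Fdom _ FG; apply.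
Qed.

Section OneStepExtension.
Variables (A : set (X * R)) (u : X).
Hypotheses (Adom : dominated_linear_graph A) (A00 : A (0, 0)).

Lemma dominated_linear_graphZ a r (k : R) : A (a, r) -> A (k *: a, k * r).
Proof. by case: Adom => AD _ _ Aar; have := AD _ _ _ _ k Aar A00; rewrite !addr0. Qed.

(* The value c to give to u: it exists since r - |a - u| <= |b + u| - s
   whenever (a, r) and (b, s) lie in A. *)
Lemma extension_value : exists c : R,
  forall a r, A (a, r) -> r + c <= `|a + u| /\ r - c <= `|a - u|.
Proof.
case: Adom => AD _ Adom_le.
pose S := [set p.2 - `|p.1 - u| | p in A].
have leS b s : A (b, s) -> ubound S (`|b + u| - s).
  move=> Abs _ [[a r] Aar <-] /=.
  have := Adom_le _ _ (AD _ _ _ _ 1 Aar Abs); rewrite scale1r mul1r => le_rs.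
  have : `|a + b| <= `|a - u| + `|b + u|.
    have -> : a + b = (a - u) + (b + u) by rewrite addrACA addNr addr0.
    exact: ler_normD.
  lra.
have supS : has_sup S.
  by split; [exists (0 - `|0 - u|), (0, 0) | exists (`|0 + u| - 0); exact: leS].
exists (sup S) => a r Aar.
have : r - `|a - u| <= sup S by apply: sup_upper_bound => //; exists (a, r).
have : sup S <= `|a + u| - r by apply: ge_sup; [case: supS | exact: leS].
lra.
Qed.

Definition graph_extension (c : R) : set (X * R) :=
  [set p | exists a r t, A (a, r) /\ p = (a + t *: u, r + t * c)].

Variable c : R.
Hypotheses (c_bound : forall a r, A (a, r) -> r + c <= `|a + u| /\ r - c <= `|a - u|)
  (u_notin : forall r, ~ A (u, r)).

Lemma graph_extension_proper : A `<` graph_extension c.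
Proof.
split=> [[a r] Aar|extA]; first by exists a, r, 0; rewrite scale0r mul0r !addr0.
have : graph_extension c (u, c) by exists 0, 0, 1; rewrite scale1r mul1r !add0r.
by move/extA/u_notin.
Qed.

Lemma graph_extension_dominated : dominated_linear_graph (graph_extension c).
Proof.
case: Adom => AD Afun Adom_le; split.
- move=> a1 r1 b1 s1 k [a [r [t [Aar [-> ->]]]]] [b [s [t' [Abs [-> ->]]]]].
  exists (k *: a + b), (k * r + s), (k * t + t'); split; first exact: AD.
  congr pair; first by rewrite scalerDl scalerDr scalerA addrACA.
  by rewrite mulrDl mulrDr mulrA addrACA.
- move=> a1 r1 s1 [a [r [t [Aar [-> ->]]]]] [b [s [t' [Abs [eq_ab ->]]]]].
  have [eq_t|neq_t] := eqVneq t t'.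
    move: eq_ab; rewrite -eq_t => /(congr1 (+%R^~ (- (t *: u)))) /=.
    by rewrite !addrK => eq_ab; rewrite eq_ab in Aar; rewrite (Afun _ _ _ Aar Abs).
  suff : A (u, (t - t')^-1 * (- r + s)) by move/u_notin.
  have -> : u = (t - t')^-1 *: (- a + b).
    apply: (@scalerI _ _ (t - t')); first by rewrite subr_eq0.
    rewrite scalerA mulfV ?subr_eq0 // scale1r scalerBl.
    have -> : b = a + t *: u - t' *: u by rewrite eq_ab addrK.
    by rewrite -addrA addKr.
  by apply: dominated_linear_graphZ; have := AD _ _ _ _ (-1) Aar Abs; rewrite scaleN1r mulN1r.
- move=> a1 r1 [a [r [t [Aar [-> ->]]]]].
  have [t0|t_neq0] := eqVneq t 0; first by rewrite t0 scale0r mul0r !addr0; exact: Adom_le.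
  have [t_gt0|t_le0] := ltP 0 t.
    have := (c_bound (dominated_linear_graphZ t^-1 Aar)).1.
    rewrite -(ler_pM2l t_gt0) mulrDr mulrA mulfV // mul1r.
    by rewrite -[X in X * `|_|]gtr0_norm // -normrZ scalerDr scalerA mulfV // scale1r.
  have nt_gt0 : 0 < - t by rewrite oppr_gt0 lt_neqAle t_le0 t_neq0.
  have := (c_bound (dominated_linear_graphZ (- t)^-1 Aar)).2.
  rewrite -(ler_pM2l nt_gt0) mulrBr mulrA mulfV ?oppr_eq0 // mul1r mulNr opprK.
  rewrite -[X in X * `|_|]gtr0_norm // -normrZ scalerBr scalerA mulfV ?oppr_eq0 //.
  by rewrite scale1r scaleNr opprK.
Qed.

End OneStepExtension.

Lemma total_dominated_linear_graph A (f : X -> R) :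
  dominated_linear_graph A -> (forall y, A (y, f y)) ->
  linear_functional f /\ forall y, `|f y| <= `|y|.
Proof.
move=> Adom Af; have [AD Afun Adom_le] := Adom; split=> [a y z|y].
  by apply: Afun (Af _) _; exact: AD.
rewrite ler_norml Adom_le ?andbT //.
have := Adom_le _ _ (AD _ _ _ _ (-1) (Af y) (dominated_linear_graph00 Adom (Af y))).
rewrite !addr0 scaleN1r mulN1r normrN => ?; lra.
Qed.

Lemma exists_norming_functional v :
  v != 0 -> exists f, dual_unit_sphere f /\ f v = `|v|.
Proof.
move=> v0.
(* The union of the empty chain is empty, so the empty graph must qualify. *)
pose P G := dominated_linear_graph G /\ (G !=set0 -> G (v, `|v|)).
have [|A [[Adom Anonempty_v] Amax]] := @Zorn_bigcup _ P.
  move=> F FP Ftot; split.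
    by apply: bigcup_dominated_linear_graph => // G /FP [].
  by move=> [p [G FG Gp]]; exists G => //; apply: (FP _ FG).2; exists p.
pose L := [set p | exists c : R, p = (c *: v, c * `|v|)].
have PL : P L.
  split=> [|_]; last by exists 1; rewrite scale1r mul1r.
  split.
  - move=> _ _ _ _ k [c1 [-> ->]] [c2 [-> ->]]; exists (k * c1 + c2).
    by rewrite scalerDl scalerA mulrDl mulrA.
  - move=> _ _ _ [c1 [-> ->]] [c2 [/eqP + ->]].
    by rewrite -subr_eq0 -scalerBl scaler_eq0 (negbTE v0) orbF subr_eq0 => /eqP ->.
  - by move=> _ _ [c [-> ->]]; rewrite normrZ ler_wpM2r ?ler_norm.
have Av : A (v, `|v|).
  apply: Anonempty_v; apply/set0P/negP => /eqP A0; apply: (Amax L) PL; rewrite A0.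
  by split=> // /(_ (v, `|v|)); apply; exists 1; rewrite scale1r mul1r.
have A00 := dominated_linear_graph00 Adom Av.
have Atotal u : exists r, A (u, r).
  apply: contrapT => /forallNP u_notin.
  have [c c_bound] := extension_value u Adom A00.
  have ext_proper : A `<` graph_extension A u c by exact: graph_extension_proper.
  apply: (Amax _ ext_proper); split=> [|_]; first exact: graph_extension_dominated.
  exact: (properW ext_proper).
have [f Af] := choice Atotal.
have [lf f_le] := total_dominated_linear_graph Adom Af.
have [_ Afun _] := Adom; have fv := Afun _ _ _ (Af v) Av.
exists f; split=> //.
exact: norming_dual_unit_sphere lf f_le v0 fv.
Qed.

End HahnBanach.

Definition average_functional (R : realType) (X : normedModType R) (I : finType)
  (h : I -> X -> R) : X -> R := fun y => #|I|%:R^-1 * \sum_i h i y.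

Section SupportFunctionals.
Variables (R : realType) (X : normedModType R) (x : X).
Hypothesis normx : `|x| = 1.
Variables (I : finType) (h : I -> X -> R).
Hypothesis I_gt0 : (0 < #|I|)%N.

Let n_gt0 : 0 < #|I|%:R :> R. Proof. by rewrite ltr0n. Qed.

Lemma support_functionals_average :
  (forall i, support_functionals x (h i)) ->
  support_functionals x (average_functional h).
Proof.
move=> hD.
have lh i : linear_functional (h i) by have [[]] := hD i.
have avg_x : average_functional h x = 1.
  rewrite /average_functional (eq_bigr (fun=> 1)) => [|i _]; last by have [] := hD i.
  by rewrite sumr_const; apply: mulVf; rewrite gt_eqF.
split => //; apply: (norming_dual_unit_sphere (v := x)).
- move=> a u v; rewrite /average_functional mulrCA -mulrDr; congr (_ * _).
  rewrite mulr_sumr -big_split /=; apply: eq_bigr => i _; exact: lh.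
- move=> y; rewrite /average_functional normrM normrV ?unitfE ?gt_eqF //.
  rewrite gtr0_norm // ler_pdivrMl //; apply: le_trans (ler_norm_sum _ _ _) _.
  have -> : #|I|%:R * `|y| = \sum_(i : I) `|y| by rewrite sumr_const mulr_natl.
  by apply: ler_sum => i _; have [+ _] := hD i; exact: dual_unit_sphere_le_norm.
- by rewrite -normr_eq0 normx oner_eq0.
- by rewrite avg_x normx.
Qed.

Lemma slice_average (eta : R) y i :
  (forall i, dual_unit_sphere (h i)) ->
  slice (average_functional h) (eta / #|I|%:R) y -> slice (h i) eta y.
Proof.
move=> hS [y1 avg_y]; split => //.
have le1 j : 0 <= 1 - h j y by rewrite subr_ge0; exact: dual_unit_sphere_le1 (hS j) y1.
have : \sum_j (1 - h j y) < eta.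
  rewrite sumrB sumr_const; change (#|I|%:R - \sum_j h j y < eta).
  have n_neq0 : #|I|%:R != 0 :> R by rewrite gt_eqF.
  move: avg_y; rewrite /average_functional -(ltr_pM2l n_gt0) mulrBr mulr1.
  rewrite mulrCA mulfV // mulr1 mulrA mulfV // mul1r; lra.
rewrite (bigD1 i) //= => lt_sum.
have : 0 <= \sum_(j | j != i) (1 - h j y) by apply: sumr_ge0 => j _; exact: le1.
lra.
Qed.

Lemma common_subslice (e : I -> R) :
  (forall i, support_functionals x (h i)) -> (forall i, 0 < e i) ->
  exists g eta, [/\ support_functionals x g, 0 < eta &
    forall i, eta <= e i /\ slice g eta `<=` slice (h i) (e i)].
Proof.
move=> hD e_gt0; pose m := \big[Order.min/1]_i e i.
have m_gt0 : 0 < m by apply/bigmin_gtP.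
have m_le i : m <= e i by exact: bigmin_le.
have n_ge1 : 1 <= #|I|%:R :> R by rewrite ler1n.
exists (average_functional h), (m / #|I|%:R); split.
- exact: support_functionals_average.
- by rewrite divr_gt0.
- move=> i; split.
    by apply: le_trans (m_le i); rewrite ler_pdivrMr // ler_peMr // ltW.
  move=> y sl; have [y1 lt_y] := slice_average i (fun j => (hD j).1) sl.
  by split=> //; have le_m := m_le i; lra.
Qed.

End SupportFunctionals.

Lemma kuratowski_lt_cover (R : realType) (X : normedModType R) (A : set X) (e : R) :
  A `<=` [set y | `|y| <= 1] -> kuratowski A < e ->
  exists n (B : nat -> set X), A `<=` \bigcup_(i in [set i | (i < n)%N]) B i /\
    forall i, (i < n)%N -> diam_le (B i) e.
Proof.
move=> A_ball; rewrite /kuratowski; set K := [set r | _] => lt_infK.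
have K2 : K 2.
  split=> //; exists 1%N, (fun _ => A); split=> [y Ay|_ _ a b /A_ball a1 /A_ball b1].
    by exists 0%N.
  by apply: le_trans (ler_normB _ _) _; rewrite /= in a1 b1; lra.
rewrite -subr_gt0 in lt_infK.
have infK : has_inf K by split; [exists 2 | exists 0 => r [/ltW]].
have [r [_ [n [B [AB diamB]]]] lt_r] := inf_adherent lt_infK infK.
exists n, B; split=> // i lt_i a b Ba Bb.
by apply: le_trans (diamB i lt_i a b Ba Bb) _; lra.
Qed.

Section FarInSlices.
Variables (R : realType) (X : normedModType R) (x : X).
Hypothesis normx : `|x| = 1.

Definition far_in_slices (T : set X) := forall g, support_functionals x g ->
  forall eta : R, 0 < eta -> exists2 y, (T `&` slice g eta) y & 2 - eta < `|x - y|.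

Lemma Dpoint_far_in_slices : Dpoint x -> far_in_slices setT.
Proof.
move=> [_ Dx] g Dg eta eta_gt0; have := Dx g Dg eta eta_gt0.
set S := [set _ | _ in _] => supS2.
have supS : has_sup S.
  split; first by exists `|x - x|, x => //; split; [rewrite normx | rewrite Dg.2 gtrBl].
  exists 2 => _ [y [y1 _] <-]; apply: le_trans (ler_normB _ _) _; rewrite normx; lra.
have [_ [y sl_y <-]] := sup_adherent eta_gt0 supS.
by rewrite supS2 => far_y; exists y.
Qed.

Lemma exists_support_functional : exists f, support_functionals x f.
Proof.
have x_neq0 : x != 0 by rewrite -normr_eq0 normx oner_eq0.
by have [f [Sf fx]] := exists_norming_functional x_neq0; exists f; split; rewrite ?fx.
Qed.

Lemma far_in_slices_refine (T : set X) (e : R) : rolewicz_alpha X ->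
  far_in_slices T -> 0 < e ->
  exists T', [/\ far_in_slices T', T' `<=` T & diam_le T' e].
Proof.
move=> alphaX farT e_gt0.
have [f0 Df0] := exists_support_functional.
have e2_gt0 : 0 < e / 2 by rewrite divr_gt0.
have [d d_gt0 alpha_d] := alphaX f0 Df0.1 (e / 2) e2_gt0.
have [n [B [coverB diamB]]] : exists n (B : nat -> set X),
    slice f0 d `<=` \bigcup_(i in [set i | (i < n)%N]) B i /\
    forall i, (i < n)%N -> diam_le (B i) e.
  by apply: kuratowski_lt_cover => [y []|]; last lra.
suff [i lt_in farTB] : exists2 i, (i < n)%N & far_in_slices (T `&` B i).
  exists (T `&` B i); split=> //.
  by move=> a b [_ Ba] [_ Bb]; exact: (diamB i lt_in).
apply: contrapT => /forall2NP nfar.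
have witness i : exists p : (X -> R) * R, (i < n)%N ->
    [/\ support_functionals x p.1, 0 < p.2 & forall y,
        (T `&` B i `&` slice p.1 p.2) y -> `|x - y| <= 2 - p.2].
  have [lt_in|_] := ltnP i n; last by exists (f0, 1).
  have [//|nfar_i] := nfar i.
  apply: contrapT => nw; apply: nfar_i => g Dg eta eta_gt0.
  apply: contrapT => ny; apply: nw; exists (g, eta) => _; split=> // y Ty.
  by rewrite leNgt; apply/negP => far_y; apply: ny; exists y.
have [p pP] := choice witness.
pose h (j : option 'I_n) := if j is Some i then (p i).1 else f0.
pose eta (j : option 'I_n) := if j is Some i then (p i).2 else d.
have [g [eta' [Dg eta'_gt0 sub]]] : exists g eta',
    [/\ support_functionals x g, 0 < eta' &
     forall j, eta' <= eta j /\ slice g eta' `<=` slice (h j) (eta j)].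
  apply: common_subslice => //; first by rewrite card_option.
    by case=> [i|] //; have [] := pP i (ltn_ord i).
  by case=> [i|] //; have [] := pP i (ltn_ord i).
have [y [Ty sl_y] far_y] := farT g Dg eta' eta'_gt0.
have [i lt_in Biy] := coverB y ((sub None).2 y sl_y).
have [_ _ near_y] := pP i lt_in.
have [le_eta sub_i] := sub (Some (Ordinal lt_in)).
have := near_y y (conj (conj Ty Biy) (sub_i y sl_y)); rewrite /= in le_eta; lra.
Qed.

End FarInSlices.

Lemma nested_sequence (T : Type) (P : set (set T)) (Q : nat -> set T -> Prop) :
  P setT -> (forall k A, P A -> exists B, [/\ P B, B `<=` A & Q k B]) ->
  exists S : nat -> set T, [/\ forall k, P (S k),
    forall k l, (k <= l)%N -> S l `<=` S k & forall k, Q k (S k.+1)].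
Proof.
move=> PT refine.
have next_ex (kA : nat * set T) : exists B, P kA.2 -> [/\ P B, B `<=` kA.2 & Q kA.1 B].
  have [/(refine kA.1)[B PB]|notP] := pselect (P kA.2); first by exists B.
  by exists set0 => /notP.
have [next nextP] := choice next_ex.
pose S := fix S k := if k is k'.+1 then next (k', S k') else setT.
have PS k : P (S k) by elim: k => // k IH; have [] := nextP (k, S k) IH.
exists S; split=> // [k l /subnKC <-|k]; last by have [] := nextP (k, S k) (PS k).
elim: (l - k)%N => [|d IH]; first by rewrite addn0.
by rewrite addnS; apply: subset_trans IH; have [] := nextP ((k + d)%N, S (k + d)%N) (PS _).
Qed.

Lemma le_of_le_add_inv_succ (R : realType) (a b c : R) :
  (forall k, a <= b + c / k.+1%:R) -> a <= b.
Proof.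
move=> le_ab; rewrite leNgt; apply/negP => lt_ba.
have [c_le0|c_gt0] := leP c 0; first by have := le_ab 0%N; rewrite divr1 => ?; lra.
have ab_gt0 : 0 < a - b by rewrite subr_gt0.
have [k] := ltr_add_invr (divr_gt0 ab_gt0 c_gt0).
rewrite add0r ltr_pdivlMr // mulrC => lt_k.
by move: (le_ab k) lt_k; set t := c / _ => ? ?; lra.
Qed.

Lemma cauchy_inv_succ_limit (R : realType) (X : completeNormedModType R) (y : nat -> X) :
  (forall k l, (k <= l)%N -> `|y k - y l| <= k.+1%:R^-1) ->
  exists z, forall k, `|y k - z| <= k.+1%:R^-1.
Proof.
move=> y_cauchy.
have y_cvg : cvg (y @ \oo).
  apply: cauchy_cvg; apply: cauchy_exP => eps eps_gt0.
  have [k] := ltr_add_invr eps_gt0; rewrite add0r => lt_k_eps.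
  exists (y k); exists k => // l /= le_kl.
  by rewrite -ball_normE /ball_ /=; exact: le_lt_trans (y_cauchy k l le_kl) lt_k_eps.
exists (lim (y @ \oo)) => k.
apply: (closed_cvg (closed_ball_ Num.norm (y k) k.+1%:R^-1)) y_cvg.
  exact: closed_closed_ball_.
by exists k => // l /= le_kl; rewrite /closed_ball_ /=; exact: y_cauchy.
Qed.

Lemma support_functional_antipode (R : realType) (X : normedModType R) (x z : X) :
  `|x| = 1 -> `|z| <= 1 -> `|x - z| = 2 ->
  exists g, support_functionals x g /\ g z = -1.
Proof.
move=> normx z1 xz2.
have xz_neq0 : x - z != 0 by rewrite -normr_eq0 xz2 pnatr_eq0.
have [g [Sg gxz]] := exists_norming_functional xz_neq0.
move: gxz; rewrite xz2 (linear_functionalB (dual_unit_sphere_linear Sg)) => gxz.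
have := dual_unit_sphere_le_norm x Sg; have := dual_unit_sphere_le_norm z Sg.
rewrite normx !ler_norml => /andP[? ?] /andP[? ?].
by exists g; split; [split=> //; lra | lra].
Qed.

Section FarLimitPoint.
Variables (R : realType) (X : completeNormedModType R) (x : X).
Hypotheses (alphaX : rolewicz_alpha X) (Dx : Dpoint x).

Lemma far_limit_point : exists z, [/\ `|z| <= 1, `|x - z| = 2 &
  forall eta, 0 < eta -> exists2 T, far_in_slices x T & T `<=` [set w | `|w - z| <= eta]].
Proof.
have normx := Dx.1.
have inv_gt0 k : 0 < k.+1%:R^-1 :> R by rewrite invr_gt0.
have [S [farS S_decr diamS]] := nested_sequence
  (Q := fun k B => diam_le B k.+1%:R^-1) (Dpoint_far_in_slices normx Dx)
  (fun k A farA => far_in_slices_refine normx alphaX farA (inv_gt0 k)).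
have [f0 Df0] := exists_support_functional normx.
have far_point k : exists y, [/\ S k.+1 y, `|y| <= 1 & 2 - k.+1%:R^-1 < `|x - y|].
  by have [y [Sy [y1 _]] far_y] := farS k.+1 f0 Df0 _ (inv_gt0 k); exists y.
have [y yP] := choice far_point.
have [z yz] : exists z, forall k, `|y k - z| <= k.+1%:R^-1.
  apply: cauchy_inv_succ_limit => k l le_kl.
  have [Syk _ _] := yP k; have [Syl _ _] := yP l.
  exact: (diamS k _ _ Syk (S_decr k.+1 l.+1 le_kl _ Syl)).
have z1 : `|z| <= 1.
  apply: (@le_of_le_add_inv_succ _ _ _ 1) => k; rewrite div1r.
  have [_ yk1 _] := yP k; have := yz k; have := ler_distD (y k) 0 z.
  rewrite !sub0r !normrN; set t := k.+1%:R^-1 => ? ?; lra.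
exists z; split=> //.
- apply/le_anti/andP; split.
    by apply: le_trans (ler_normB _ _) _; rewrite normx; lra.
  apply: (@le_of_le_add_inv_succ _ _ _ 2) => k.
  have [_ _ far_yk] := yP k; have := yz k; have := ler_distD z x (y k).
  move: far_yk; rewrite [`|z - y k|]distrC; set t := k.+1%:R^-1 => ? ? ?; lra.
- move=> eta eta_gt0; have eta2_gt0 : 0 < eta / 2 by rewrite divr_gt0.
  have [k lt_k] := ltr_add_invr eta2_gt0; rewrite add0r in lt_k.
  exists (S k.+1) => [|w Sw]; first exact: farS.
  have [Syk _ _] := yP k.
  have := diamS k _ _ Sw Syk; have := yz k; have := ler_distD (y k) w z.
  move: lt_k; rewrite /=; set t := k.+1%:R^-1 => ? ? ? ?; lra.
Qed.

End FarLimitPoint.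

Theorem corollary5p3 (R : realType) (X : completeNormedModType R) :
  rolewicz_alpha X -> forall x : X, ~ Dpoint x.
Proof.
move=> alphaX x Dx.
have [z [z1 xz2 near_z]] := far_limit_point alphaX Dx.
have [g [Dg gz]] := support_functional_antipode Dx.1 z1 xz2.
have half_gt0 : 0 < 2^-1 :> R by rewrite invr_gt0.
have [T farT near_zT] := near_z _ half_gt0.
have [w [Tw [_ gw]] _] := farT g Dg 1 ltr01.
have := near_zT w Tw; have := dual_unit_sphere_le_norm (w - z) Dg.1.
rewrite (linear_functionalB (dual_unit_sphere_linear Dg.1)) gz ler_norml.
by move=> /andP[_ ?] /= ?; lra.
Qed.
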